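(* Let $a\ge0$ and let $\mathfrak g=\mathfrak r'_{3,a}$, the Lie algebra with basis $\{e_1,e_2,e_3\}$ and nonzero brackets $[e_1,e_2]=ae_2-e_3$, $[e_1,e_3]=e_2+ae_3$, identified with $\mathbb R^3$ via this basis. Then $$U=\left\{\begin{pmatrix}1&0&0\\0&1&0\\0&0&1/\lambda\end{pmatrix}:\lambda\ge1\right\}$$ is a set of representatives of $\mathcal{PM}(\mathfrak g)$.
   Context: $\mathcal M(\mathfrak g)$ is the set of inner products on $\mathfrak g\cong\mathbb R^3$, with $\mathrm{GL}_3(\mathbb R)$-action $g.\langle\cdot,\cdot\rangle=\langle g^{-1}\cdot,g^{-1}\cdot\rangle$; $\langle\cdot,\cdot\rangle_0$ makes $\{e_1,e_2,e_3\}$ orthonormal. Two inner products are isometric up to scaling if $\langle\cdot,\cdot\rangle_1=k\langle f\cdot,f\cdot\rangle_2$ for some $k>0$ and Lie algebra automorphism $f$; $[\langle\cdot,\cdot\rangle]$ denotes the equivalence class and $\mathcal{PM}(\mathfrak g)$ the set of classes. A subset $U\subset\mathrm{GL}_3(\mathbb R)$ is a set of representatives of $\mathcal{PM}(\mathfrak g)$ if $\mathcal{PM}(\mathfrak g)=\{[h.\langle\cdot,\cdot\rangle_0]: h\in U\}$. *)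

From HB Require Import structures.
From mathcomp Require Import all_boot all_order all_algebra.
From mathcomp Require Import reals.
Set Implicit Arguments. Unset Strict Implicit. Unset Printing Implicit Defensive.
Import Order.TTheory GRing.Theory Num.Theory.
Local Open Scope ring_scope.

(* g = R^3 as column vectors, coordinates w.r.t. the basis e1, e2, e3
   (indices 0,1,2). *)
Definition vec (R : realType) := 'cV[R]_3.

(* Lie bracket of r'_{3,a}:  [e1,e2] = a e2 - e3, [e1,e3] = e2 + a e3,
   [e2,e3] = 0, extended bilinearly and antisymmetrically. *)
Definition r3a_bracket (R : realType) (a : R) (x y : vec R) : vec R :=
  let p := x 0 0 * y 1 0 - x 1 0 * y 0 0 in
  let q := x 0 0 * y 2%:R 0 - x 2%:R 0 * y 0 0 in
  \col_(i < 3) (if i == 0 then 0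
                else if i == 1 then a * p + q
                else - p + a * q).

Definition lie_aut (R : realType) (a : R) (f : 'M[R]_3) : Prop :=
  f \in unitmx /\
  forall x y : vec R, f *m r3a_bracket a x y = r3a_bracket a (f *m x) (f *m y).

Definition is_inner_product (R : realType) (B : vec R -> vec R -> R) : Prop :=
  (forall (c : R) x y z, B (c *: x + y) z = c * B x z + B y z) /\
  (forall x y, B x y = B y x) /\
  (forall x, x != 0 -> 0 < B x x).

Definition ip0 (R : realType) (x y : vec R) : R := \sum_(i < 3) x i 0 * y i 0.

Definition gl_act (R : realType) (g : 'M[R]_3) (B : vec R -> vec R -> R)
  : vec R -> vec R -> R :=
  fun x y => B (invmx g *m x) (invmx g *m y).

(* Isometric up to scaling: B1 = k B2(f ., f .) with k > 0, f a Lie algebra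
   automorphism.  [B1] = [B2] in PM(g) iff this holds. *)
Definition isom_up_to_scaling (R : realType) (a : R)
  (B1 B2 : vec R -> vec R -> R) : Prop :=
  exists k : R, 0 < k /\ exists f : 'M[R]_3, lie_aut a f /\
    forall x y, B1 x y = k * B2 (f *m x) (f *m y).

Definition hU (R : realType) (lam : R) : 'M[R]_3 :=
  \matrix_(i < 3, j < 3) (if i == j then (if i == 2%:R then lam^-1 else 1) else 0).

(* U is a set of representatives of PM(g): the set of classes of inner
   products equals {[h.<.,.>_0] : h in U}. *)
Definition set_of_representatives (R : realType) (a : R) (U : 'M[R]_3 -> Prop) : Prop :=
  (forall h, U h -> h \in unitmx /\ is_inner_product (gl_act h (@ip0 R))) /\
  (forall B, is_inner_product B ->
     exists h, U h /\ isom_up_to_scaling a B (gl_act h (@ip0 R))).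

(* The maps fixing e1 modulo span(e2, e3) and acting on span(e2, e3) by a
   rotation-dilation are Lie algebra automorphisms for every [a].  Given an inner product, a
   rotation-dilation diagonalises its restriction to span(e2, e3) as
   diag(1, lam^2) with [lam >= 1] (the square root of the ratio of the
   eigenvalues); a shear makes e1 orthogonal to span(e2, e3), and the
   remaining factor is the Schur complement [k].  The Gram matrix becomes
   k diag(1, 1, lam^2), the Gram matrix of k (hU lam).<,>_0. *)

From HB Require Import structures.
From mathcomp Require Import all_boot all_order all_algebra.
From mathcomp Require Import reals.
From mathcomp Require Import ring lra.
Set Implicit Arguments. Unset Strict Implicit. Unset Printing Implicit Defensive.
Import Order.TTheory GRing.Theory Num.Theory.
Local Open Scope ring_scope.

Section InnerProductsOnR3.
Variable R : realType.

Lemma ord3_cases (i : 'I_3) : [\/ i = 0, i = 1 | i = 2%:R].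
Proof. by case: i => [[|[|[|//]]] ?]; [constructor 1|constructor 2|constructor 3]; apply/val_inj. Qed.

Lemma sum_ord3 (F : 'I_3 -> R) : \sum_(i < 3) F i = F 0 + F 1 + F 2%:R.
Proof. by rewrite !big_ord_recr big_ord0 /= add0r; congr (F _ + F _ + F _); apply/val_inj. Qed.

Definition col3 (u v w : R) : vec R :=
  \col_(i < 3) (if i == 0 then u else if i == 1 then v else w).

Lemma col3_0 u v w : col3 u v w 0 0 = u. Proof. by rewrite mxE. Qed.
Lemma col3_1 u v w : col3 u v w 1 0 = v. Proof. by rewrite mxE. Qed.
Lemma col3_2 u v w : col3 u v w 2%:R 0 = w. Proof. by rewrite mxE. Qed.
Definition col3E := (col3_0, col3_1, col3_2).

Lemma col3_eta (x : vec R) : x = col3 (x 0 0) (x 1 0) (x 2%:R 0).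
Proof.
apply/matrixP => i j; rewrite (ord1 j).
by case: (ord3_cases i) => ->; rewrite col3E.
Qed.

Lemma col3_eq0 u v w : (col3 u v w == 0) = [&& u == 0, v == 0 & w == 0].
Proof.
apply/eqP/and3P => [e | [/eqP-> /eqP-> /eqP->]].
  by split; apply/eqP; [move/(congr1 (fun x : vec R => x 0 0)): e
    | move/(congr1 (fun x : vec R => x 1 0)): e
    | move/(congr1 (fun x : vec R => x 2%:R 0)): e]; rewrite col3E mxE.
by apply/matrixP => i j; rewrite !mxE; case: (ord3_cases i) => ->.
Qed.

Definition mx3 (a00 a01 a02 a10 a11 a12 a20 a21 a22 : R) : 'M[R]_3 :=
  \matrix_(i < 3, j < 3)
   (if i == 0 then (if j == 0 then a00 else if j == 1 then a01 else a02)
    else if i == 1 then (if j == 0 then a10 else if j == 1 then a11 else a12)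
    else (if j == 0 then a20 else if j == 1 then a21 else a22)).

Lemma mul_mx3_col3 a00 a01 a02 a10 a11 a12 a20 a21 a22 u v w :
  mx3 a00 a01 a02 a10 a11 a12 a20 a21 a22 *m col3 u v w =
  col3 (a00 * u + a01 * v + a02 * w) (a10 * u + a11 * v + a12 * w)
       (a20 * u + a21 * v + a22 * w).
Proof.
apply/matrixP => i j; rewrite (ord1 j) !mxE sum_ord3 !col3E !mxE.
by case: (ord3_cases i) => ->.
Qed.

Lemma ip0_col3 x0 x1 x2 y0 y1 y2 :
  ip0 (col3 x0 x1 x2) (col3 y0 y1 y2) = x0 * y0 + x1 * y1 + x2 * y2.
Proof. by rewrite /ip0 sum_ord3 !col3E. Qed.

Lemma ip0_gt0 (x : vec R) : x != 0 -> 0 < ip0 x x.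
Proof.
move=> nz; have sq_ge0 i : 0 <= x i 0 * x i 0 by rewrite -expr2 sqr_ge0.
rewrite lt0r sumr_ge0 ?andbT // psumr_eq0 //.
apply: contra nz => /allP x0; apply/eqP/matrixP => i j; rewrite (ord1 j) mxE.
by apply/eqP; have := x0 i (mem_index_enum i); rewrite mulf_eq0 orbb.
Qed.

Lemma is_inner_product_ip0 : is_inner_product (@ip0 R).
Proof.
split; last split; last exact: ip0_gt0.
  move=> c x y z; rewrite /ip0 mulr_sumr -big_split.
  by apply: eq_bigr => i _; rewrite !mxE mulrDl mulrA.
by move=> x y; apply: eq_bigr => i _; rewrite mulrC.
Qed.

Lemma is_inner_product_gl_act (g : 'M[R]_3) B :
  g \in unitmx -> is_inner_product B -> is_inner_product (gl_act g B).
Proof.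
move=> gU [Blin [Bsym Bpos]]; rewrite /gl_act.
split; last split; first by move=> c x y z; rewrite mulmxDr -scalemxAr Blin.
  by move=> x y; rewrite Bsym.
move=> x nz; apply: Bpos; apply: contraNneq nz => gx0.
by rewrite -(mulKVmx gU x) gx0 mulmx0.
Qed.

Definition e1 := col3 1 0 0.
Definition e2 := col3 0 1 0.
Definition e3 := col3 0 0 1.

Section InnerProduct.
Variable B : vec R -> vec R -> R.
Hypothesis Bip : is_inner_product B.

Lemma ip_col3l u v w z : B (col3 u v w) z = u * B e1 z + v * B e2 z + w * B e3 z.
Proof.
have [Blin _] := Bip.
have B0 : B 0 z = 0 by have := Blin 1 0 0 z; rewrite scaler0 addr0 mul1r; lra.
have -> : col3 u v w = u *: e1 + (v *: e2 + (w *: e3 + 0)).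
  by apply/matrixP => i j; rewrite !mxE; case: (ord3_cases i) => -> /=; ring.
by rewrite !Blin B0 addr0 !addrA.
Qed.

Lemma ip_col3 x0 x1 x2 y0 y1 y2 :
  B (col3 x0 x1 x2) (col3 y0 y1 y2) =
  x0 * y0 * B e1 e1 + x1 * y1 * B e2 e2 + x2 * y2 * B e3 e3
  + (x0 * y1 + x1 * y0) * B e1 e2 + (x0 * y2 + x2 * y0) * B e1 e3
  + (x1 * y2 + x2 * y1) * B e2 e3.
Proof.
have [_ [Bsym _]] := Bip.
rewrite ip_col3l !(Bsym _ (col3 y0 y1 y2)) (ip_col3l y0 y1 y2 e1).
rewrite (ip_col3l y0 y1 y2 e2) (ip_col3l y0 y1 y2 e3).
rewrite (Bsym e2 e1) (Bsym e3 e1) (Bsym e3 e2); ring.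
Qed.

Lemma ip_col3_gt0 x0 x1 x2 : [|| x0 != 0, x1 != 0 | x2 != 0] ->
  0 < B (col3 x0 x1 x2) (col3 x0 x1 x2).
Proof. by move=> nz; apply: Bip.2.2; rewrite col3_eq0 !negb_and. Qed.

Lemma ip_e2_gt0 : 0 < B e2 e2.
Proof. by apply: ip_col3_gt0; rewrite oner_eq0 orbT. Qed.

(* Positivity at [B e2 e3 * e2 - B e2 e2 * e3] is the strict Cauchy-Schwarz inequality. *)
Lemma ip_e2e3_minor : B e2 e3 ^+ 2 < B e2 e2 * B e3 e3.
Proof.
have e22 := ip_e2_gt0.
have := @ip_col3_gt0 0 (B e2 e3) (- B e2 e2).
rewrite oppr_eq0 (gt_eqF e22) !orbT ip_col3 => /(_ isT) pos.
nra.
Qed.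

End InnerProduct.

Lemma r3a_bracket_col3 (a : R) x0 x1 x2 y0 y1 y2 :
  r3a_bracket a (col3 x0 x1 x2) (col3 y0 y1 y2) =
  col3 0 (a * (x0 * y1 - x1 * y0) + (x0 * y2 - x2 * y0))
         (- (x0 * y1 - x1 * y0) + a * (x0 * y2 - x2 * y0)).
Proof.
rewrite /r3a_bracket !col3E; apply/matrixP => i j; rewrite (ord1 j) !mxE.
by case: (ord3_cases i) => ->.
Qed.

(* On span(e2, e3), [ad e1] and this map are both rotation-dilations, so they commute. *)
Definition shear_rot (al be v2 v3 : R) : 'M[R]_3 := mx3 1 0 0 v2 al be v3 (- be) al.

Lemma shear_rot_aut (a al be v2 v3 : R) : al ^+ 2 + be ^+ 2 != 0 ->
  lie_aut a (shear_rot al be v2 v3).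
Proof.
move=> nz; split.
  pose s := al ^+ 2 + be ^+ 2.
  have inv : shear_rot al be v2 v3 *m
      mx3 1 0 0 (- (al * v2 - be * v3) / s) (al / s) (- be / s)
                (- (be * v2 + al * v3) / s) (be / s) (al / s) = 1%:M.
    apply/matrixP => i j; rewrite !mxE sum_ord3 !mxE.
    by case: (ord3_cases i) => ->; case: (ord3_cases j) => -> /=; rewrite /s; field.
  by have [] := mulmx1_unit inv.
move=> x y; rewrite (col3_eta x) (col3_eta y) r3a_bracket_col3 !mul_mx3_col3.
by rewrite r3a_bracket_col3; congr col3; ring.
Qed.

Definition stretch3 (lam : R) : 'M[R]_3 := mx3 1 0 0 0 1 0 0 0 lam.

Lemma hU_unit_inv (lam : R) : lam != 0 ->
  hU lam \in unitmx /\ invmx (hU lam) = stretch3 lam.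
Proof.
move=> nz; have inv : hU lam *m stretch3 lam = 1%:M.
  apply/matrixP => i j; rewrite !mxE sum_ord3 !mxE.
  case: (ord3_cases i) => ->; case: (ord3_cases j) => -> /=;
    by rewrite ?mulr0 ?mul0r ?mulr1 ?addr0 ?add0r ?mulVf.
have [hU_unit _] := mulmx1_unit inv; split => //.
by rewrite -[RHS]mul1mx -(mulVmx hU_unit) -mulmxA inv mulmx1.
Qed.

Lemma sqr_pair_of_mul (X Y c : R) : 0 <= X -> 0 <= Y -> X * Y = c ^+ 2 ->
  exists a b, [/\ a ^+ 2 = X, b ^+ 2 = Y & a * b = c].
Proof.
move=> X0 Y0 XY.
have sXY : Num.sqrt X * Num.sqrt Y = `|c| by rewrite -sqrtrM // XY sqrtr_sqr.
have [c0|c0] := lerP 0 c.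
  by exists (Num.sqrt X), (Num.sqrt Y); rewrite !sqr_sqrtr // sXY ger0_norm.
exists (Num.sqrt X), (- Num.sqrt Y).
by rewrite sqrrN !sqr_sqrtr // mulrN sXY ltr0_norm ?opprK.
Qed.

(* [(a, b)] is an eigenvector for the smaller eigenvalue [a^2 + b^2], and
   [lam^2] is the ratio of the two eigenvalues. *)
Lemma posdef2_decomp (p q r : R) : 0 < p -> r ^+ 2 < p * q ->
  exists a b lam, [/\ 1 <= lam, 0 < a ^+ 2 + b ^+ 2,
    p = a ^+ 2 + lam ^+ 2 * b ^+ 2, q = b ^+ 2 + lam ^+ 2 * a ^+ 2
    & r = (1 - lam ^+ 2) * a * b].
Proof.
move=> p0 rpq; have pq0 : 0 < p * q := le_lt_trans (sqr_ge0 r) rpq.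
have q0 : 0 < q by rewrite pmulr_rgt0 in pq0.
pose D := (p - q) ^+ 2 + 4 * r ^+ 2.
have D0 : 0 <= D by rewrite addr_ge0 ?sqr_ge0 // mulr_ge0 ?sqr_ge0.
pose d := Num.sqrt D.
have d0 : 0 <= d := sqrtr_ge0 D.
have dD : d ^+ 2 = D := sqr_sqrtr D0.
have [d_eq0|d_neq0] := eqVneq d 0.
  have : (p - q) ^+ 2 + 4 * r ^+ 2 = 0 by rewrite -/D -dD d_eq0 expr0n.
  move/eqP; rewrite (paddr_eq0 (sqr_ge0 _) (mulr_ge0 (ler0n _ 4) (sqr_ge0 _))).
  rewrite sqrf_eq0 mulf_eq0 pnatr_eq0 sqrf_eq0 subr_eq0 /= => /andP[/eqP<- /eqP->].
  exists (Num.sqrt p), 0, 1; rewrite sqr_sqrtr ?(ltW p0) //.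
  by split; [|rewrite expr0n addr0|ring..].
(* the smaller eigenvalue *)
pose t := (p + q - d) / 2.
have d_lt : d < p + q.
  rewrite -[p + q]ger0_norm ?addr_ge0 ?ltW // -sqrtr_sqr ltr_sqrt ?exprn_gt0 ?addr_gt0 //.
  rewrite /D; nra.
have d_ge : `|p - q| <= d by rewrite -sqrtr_sqr ler_wsqrtr // lerDl mulr_ge0 ?sqr_ge0.
have t0 : 0 < t by rewrite /t; lra.
have le_tp : t <= p by have := ler_norm (q - p); rewrite distrC /t; lra.
have le_tq : t <= q by have := ler_norm (p - q); rewrite /t; lra.
have dt : d = p + q - 2 * t by rewrite /t; field.
have char_t : (q - t) * (p - t) = r ^+ 2.
  have -> : r ^+ 2 = (d ^+ 2 - (p - q) ^+ 2) / 4 by rewrite dD /D; field.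
  by rewrite /t; field.
have [a [b [a2 b2 ab]]] : exists a b, [/\ a ^+ 2 = t * (q - t) / d,
    b ^+ 2 = t * (p - t) / d & a * b = - (r * t / d)].
  apply: sqr_pair_of_mul; try by rewrite divr_ge0 // mulr_ge0 ?subr_ge0 // ltW.
  have -> : t * (q - t) / d * (t * (p - t) / d) = t ^+ 2 * ((q - t) * (p - t)) / d ^+ 2.
    by field.
  by rewrite char_t; field.
have lam1 : 1 <= Num.sqrt ((t + d) / t).
  by rewrite -sqrtr1 ler_wsqrtr // ler_pdivlMr // mul1r lerDl.
have lam2 : Num.sqrt ((t + d) / t) ^+ 2 = (t + d) / t.
  by rewrite sqr_sqrtr // divr_ge0 ?addr_ge0 // ltW.
exists a, b, (Num.sqrt ((t + d) / t)).
rewrite lam2 -[_ * a * b]mulrA ab a2 b2.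
have pE : p = d - q + 2 * t by rewrite dt; ring.
clearbody t d; rewrite {}pE.
have t_neq0 : t != 0 := lt0r_neq0 t0.
split; [done| |by field; apply/andP..].
suff -> : t * (q - t) / d + t * (d - q + 2 * t - t) / d = t by [].
by field.
Qed.

Lemma inner_product_normal_form B : is_inner_product B ->
  exists k lam al be v2 v3, [/\ 0 < k, 1 <= lam, al ^+ 2 + be ^+ 2 != 0 &
    forall x y, B x y = k * ip0 (stretch3 lam *m (shear_rot al be v2 v3 *m x))
                                (stretch3 lam *m (shear_rot al be v2 v3 *m y))].
Proof.
move=> Bip.
have [a [b [lam [lam1 t0 E22 E33 E23]]]] :=
  posdef2_decomp (ip_e2_gt0 Bip) (ip_e2e3_minor Bip).
have t_neq0 : a ^+ 2 + b ^+ 2 != 0 := lt0r_neq0 t0.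
have lam_neq0 : lam != 0 := lt0r_neq0 (lt_le_trans ltr01 lam1).
pose w1 := (a * B e1 e2 + b * B e1 e3) / (a ^+ 2 + b ^+ 2).
pose w2 := (a * B e1 e3 - b * B e1 e2) / (a ^+ 2 + b ^+ 2).
pose K := B e1 e1 - w1 ^+ 2 - (w2 / lam) ^+ 2.
have E12 : B e1 e2 = a * w1 - b * w2 by rewrite /w1 /w2; field.
have E13 : B e1 e3 = b * w1 + a * w2 by rewrite /w1 /w2; field.
have E11 : B e1 e1 = K + w1 ^+ 2 + (w2 / lam) ^+ 2 by rewrite /K; ring.
clearbody w1 w2 K.
(* [K] is the Schur complement: the value of [B] at e1 minus its [B]-orthogonal
   projection on span(e2, e3). *)
have K0 : 0 < K.
  pose y1 := - w1; pose y2 := - w2 / lam ^+ 2.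
  pose x1 := (a * y1 - b * y2) / (a ^+ 2 + b ^+ 2).
  pose x2 := (b * y1 + a * y2) / (a ^+ 2 + b ^+ 2).
  have <- : B (col3 1 x1 x2) (col3 1 x1 x2) = K.
    rewrite (ip_col3 Bip) E11 E12 E13 E22 E33 E23 /x1 /x2 /y1 /y2.
    field; exact/andP.
  by apply: (ip_col3_gt0 Bip); rewrite oner_neq0.
have s_neq0 : Num.sqrt K != 0 by rewrite lt0r_neq0 // sqrtr_gt0.
have {}E11 : B e1 e1 = Num.sqrt K ^+ 2 + w1 ^+ 2 + (w2 / lam) ^+ 2.
  by rewrite E11 sqr_sqrtr // ltW.
exists (Num.sqrt K ^+ 2), lam, (a / Num.sqrt K), (b / Num.sqrt K),
  (w1 / Num.sqrt K), (w2 / (lam ^+ 2 * Num.sqrt K)); split => //.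
- by rewrite exprn_gt0 // sqrtr_gt0.
- by rewrite !expr_div_n -mulrDl mulf_neq0 // invr_eq0 expf_neq0.
move=> x y; rewrite (col3_eta x) (col3_eta y) /shear_rot /stretch3 !mul_mx3_col3.
rewrite ip0_col3 (ip_col3 Bip) E11 E12 E13 E22 E33 E23.
by field; exact/andP.
Qed.

End InnerProductsOnR3.

Theorem proposition3p10 (R : realType) (a : R) (ha : 0 <= a) :
  set_of_representatives a
    (fun h : 'M[R]_3 => exists lam : R, 1 <= lam /\ h = hU lam).
Proof.
have lam_neq0 (lam : R) : 1 <= lam -> lam != 0.
  by move=> lam1; rewrite lt0r_neq0 // (lt_le_trans ltr01).
split.
  move=> _ [lam [lam1 ->]]; have [hU_unit _] := hU_unit_inv (lam_neq0 _ lam1).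
  by split; last exact: is_inner_product_gl_act hU_unit (is_inner_product_ip0 R).
move=> B Bip.
have [k [lam [al [be [v2 [v3 [k0 lam1 nz BE]]]]]]] := inner_product_normal_form Bip.
exists (hU lam); split; first by exists lam.
exists k; split => //; exists (shear_rot al be v2 v3); split; first exact: shear_rot_aut.
by rewrite /gl_act; have [_ ->] := hU_unit_inv (lam_neq0 _ lam1).
Qed.
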